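(* Let $\varphi$ be the automorphism of the free group $F=F(a,b)$ with $\varphi(a)=aba$, $\varphi(b)=a$, and let $A=\langle a,b,t\mid tat^{-1}=\varphi(a),\ tbt^{-1}=\varphi(b)\rangle$. Then the distortion function $\mathrm{Dist}^A_F$ (with respect to the generating sets $R=\{a,b\}$ of $F$ and $T=\{a,b,t\}$ of $A$) is equivalent to an exponential function and admits an exponentially bounded sequence of palindromic certificates in $F$.
   Context: $\mathrm{Dist}^A_F(n)=\max\{|g|_R: g\in F,\ |g|_T\le n\}$, extended to $[0,\infty)$ by linear interpolation. Equivalence of functions: $f\preceq g$ if there are $A',B,C>0$ with $f(x)\le g(A'x)+Bx$ for $x>C$; $f\sim g$ if both $f\preceq g$ and $g\preceq f$. An exponentially bounded sequence of certificates is a sequence $(g_m)$ in $F$ together with $C>1$ such that $|g_m|_R\to\infty$, $|g_{m+1}|_R\le C|g_m|_R$ for all $m$, and $\mathrm{Dist}^A_F(|g_m|_T/C)\le C|g_m|_R$ for all $m$; it is palindromic if each $g_m$ is represented by a reduced word in $R$ that reads the same left-to-right and right-to-left. *)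

From Stdlib Require Import Reals ZArith.
From mathcomp Require Import all_boot.

Set Implicit Arguments.
Unset Strict Implicit.
Unset Printing Implicit Defensive.

(* A letter (c, s): c = false is a, c = true is b; s = true means inverse. *)
Definition letter := (bool * bool)%type.
Definition la : letter := (false, false).
Definition lb : letter := (true, false).
Definition linv (x : letter) : letter := (x.1, ~~ x.2).

Definition reduce (w : seq letter) : seq letter :=
  foldr (fun x acc => if acc is y :: r then
                        (if y == linv x then r else x :: acc)
                      else [:: x]) [::] w.
Definition reduced (w : seq letter) : bool := reduce w == w.

Definition winv (w : seq letter) : seq letter := rev (map linv w).
Definition fmul (u v : seq letter) : seq letter := reduce (u ++ v).

Definition lenR (g : seq letter) : nat := size (reduce g).

(* the automorphism phi : a |-> aba, b |-> a, and its inverse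
   psi : a |-> b, b |-> b^-1 a b^-1 *)
Definition phi_gen (c : bool) : seq letter :=
  if c then [:: la] else [:: la; lb; la].
Definition psi_gen (c : bool) : seq letter :=
  if c then [:: linv lb; la; linv lb] else [:: lb].
Definition subst (f : bool -> seq letter) (w : seq letter) : seq letter :=
  reduce (flatten [seq (if x.2 then winv (f x.1) else f x.1) | x <- w]).
Definition phi := subst phi_gen.
Definition psi := subst psi_gen.
Definition phiZ (k : Z) (w : seq letter) : seq letter :=
  if (0 <=? k)%Z then ssrnat.iter (Z.to_nat k) phi (reduce w)
  else ssrnat.iter (Z.to_nat (- k)) psi (reduce w).

(* ---------- The group A = <a,b,t | t a t^-1 = phi a, t b t^-1 = phi b> ----
   modelled as the semidirect product F x|_phi Z: the element (u, k)
   stands for u t^k, with t w t^-1 = phi(w). *)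
(* letters of T = {a,b,t}: None = t, Some c = a or b; second component:
   inverse flag *)
Definition tletter := (option bool * bool)%type.

Definition astep (st : seq letter * Z) (x : tletter) : seq letter * Z :=
  let: (u, k) := st in
  match x with
  | (None, s) => (u, if s then (k - 1)%Z else (k + 1)%Z)
  | (Some c, s) => (fmul u (phiZ k [:: (c, s)]), k)
  end.

Definition evalA (w : seq tletter) : seq letter * Z := foldl astep ([::], 0%Z) w.

Definition talphabet : seq tletter :=
  [:: (None, false); (None, true); (Some false, false); (Some false, true);
      (Some true, false); (Some true, true)].

Definition words (n : nat) : seq (seq tletter) :=
  ssrnat.iter n (fun ws => [seq x :: w | x <- talphabet, w <- ws]) [:: [::]].

Definition represents (g : seq letter) (w : seq tletter) : bool :=
  ((evalA w).1 == reduce g) && Z.eqb (evalA w).2 0.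

(* |g|_T : word length in A w.r.t. T = {a,b,t}; the least n such that some
   word of length n represents g (at most |g|_R, so the search range
   suffices). *)
Definition lenT (g : seq letter) : nat :=
  find (fun n => has (represents g) (words n)) (iota 0 (lenR g).+1).

(* Dist^A_F(n) = max { |g|_R : g in F, |g|_T <= n }, on integers; the
   elements g in F with |g|_T <= n are exactly the values of words of length
   <= n over T with t-exponent sum 0. *)
Definition DistN (n : nat) : nat :=
  foldr maxn 0 [seq lenR (evalA w).1 |
                 w <- flatten [seq words k | k <- iota 0 n.+1] &
                 Z.eqb (evalA w).2 0].

(* extension to [0, oo) by linear interpolation *)
Definition Dist (x : R) : R :=
  let n := Z.to_nat (Int_part x) in
  Rplus (INR (DistN n)) (Rmult (Rminus x (INR n)) (Rminus (INR (DistN n.+1)) (INR (DistN n)))).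

Definition fle (f g : R -> R) : Prop :=
  exists A' B C : R, Rlt 0 A' /\ Rlt 0 B /\ Rlt 0 C /\
    forall x : R, Rlt C x -> Rle (f x) (Rplus (g (Rmult A' x)) (Rmult B x)).
Definition fequiv (f g : R -> R) : Prop := fle f g /\ fle g f.

Definition exp_bounded_certificates (gs : nat -> seq letter) : Prop :=
  (forall m, reduced (gs m)) /\
  exists C : R, Rlt 1 C /\
    (forall N : nat, exists M : nat, forall m : nat, (M <= m)%N -> (N <= lenR (gs m))%N) /\
    (forall m : nat, Rle (INR (lenR (gs m.+1))) (Rmult C (INR (lenR (gs m))))) /\
    (forall m : nat, Rle (Dist (Rdiv (INR (lenT (gs m))) C)) (Rmult C (INR (lenR (gs m))))).

Definition palindromic (gs : nat -> seq letter) : Prop :=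
  forall m, rev (reduce (gs m)) = reduce (gs m).

(* The certificates are g_m = phi^m(a).  The images aba and a of the
   generators are positive palindromes, so every g_m is a reduced positive
   palindrome, and its letter counts evolve by (#a, #b) |-> (2#a + #b, #a),
   which gives 2^m <= |g_m|_R <= 3 |g_(m-1)|_R.  In A, g_m = t^m a t^-m has
   T-length at most 2m + 1; this is the exponential lower bound for Dist.
   Conversely, a T-word of length n only applies phi^k with |k| <= n to its
   letters, and phi, phi^-1 at most triple lengths, so it represents an
   element of R-length at most n 3^n <= 8^n. *)

From Stdlib Require Import Reals ZArith Lia Lra.
From mathcomp Require Import all_boot zify.

Set Implicit Arguments.
Unset Strict Implicit.

Lemma reduce_cons x w : reduce (x :: w) =
  if reduce w is y :: r then (if y == linv x then r else x :: reduce w) else [:: x].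
Proof. by []. Qed.

Lemma size_reduce w : size (reduce w) <= size w.
Proof.
elim: w => [|x w IH] //; rewrite reduce_cons.
by case: (reduce w) IH => [|y r] //= IH; case: ifP => _ /=; lia.
Qed.

Lemma size_fmul u v : size (fmul u v) <= size u + size v.
Proof. by rewrite -size_cat size_reduce. Qed.

Lemma size_subst f c w : (forall b, size (f b) <= c) -> size (subst f w) <= c * size w.
Proof.
move=> f_c; apply: leq_trans (size_reduce _) _.
elim: w => [|x w IH] //=; rewrite size_cat mulnS leq_add //.
by case: x.2; rewrite ?size_rev ?size_map f_c.
Qed.

Lemma size_iter_subst f c j w : (forall b, size (f b) <= c) ->
  size (iter j (subst f) w) <= c ^ j * size w.
Proof.
move=> f_c; elim: j => [|j IH] /=; first by rewrite mul1n.
by rewrite expnS -mulnA (leq_trans (size_subst _ f_c)) // leq_mul2l IH orbT.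
Qed.

Lemma size_phiZ_letter k x : size (phiZ k [:: x]) <= 3 ^ Z.abs_nat k.
Proof.
rewrite /phiZ; case: ifP => /Z.leb_spec0 k_ge0.
- rewrite (_ : Z.abs_nat k = Z.to_nat k); last by lia.
  by rewrite -[3 ^ _]muln1 size_iter_subst //; case.
- rewrite (_ : Z.abs_nat k = Z.to_nat (- k)); last by lia.
  by rewrite -[3 ^ _]muln1 size_iter_subst //; case.
Qed.

Lemma size_foldl_astep w u k :
  size (foldl astep (u, k) w).1 <= size u + size w * 3 ^ (Z.abs_nat k + size w).
Proof.
elim: w u k => [|[[c|] s] w IH] u k /=; first exact: leq_addr.
- apply: leq_trans (IH _ _) _; rewrite mulSn addnA leq_add ?leq_mul ?leq_pexp2l //.
  + apply: leq_trans (size_fmul _ _) _; rewrite leq_add2l.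
    by apply: leq_trans (size_phiZ_letter _ _) _; rewrite leq_pexp2l // leq_addr.
  + by rewrite addnS.
- apply: leq_trans (IH _ _) _; rewrite mulSn leq_add2l (leq_trans _ (leq_addl _ _)) //.
  by rewrite leq_mul // leq_pexp2l //; case: s; lia.
Qed.

Lemma size_evalA w : size (evalA w).1 <= size w * 3 ^ size w.
Proof. exact: size_foldl_astep. Qed.

Lemma mem_words n w : (w \in words n) = (size w == n).
Proof.
elim: n w => [|n IH] w; first by case: w.
have -> : words n.+1 = [seq y :: v | y <- talphabet, v <- words n] by [].
apply/allpairsP/idP => [[[y v] [_ /= v_n ->]]|]; first by rewrite /= eqSS -IH.
case: w => // x w; rewrite eqSS -IH => w_n.
by exists (x, w); case: x => [[[]|] []].
Qed.

Lemma mem_words_upto n w :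
  (w \in flatten [seq words k | k <- iota 0 n.+1]) = (size w <= n).
Proof.
apply/flatten_mapP/idP => [[k] | w_n]; first by rewrite mem_iota mem_words => k_n /eqP ->.
by exists (size w); rewrite ?mem_iota ?mem_words.
Qed.

Lemma DistN_leP n m :
  reflect (forall w, size w <= n -> Z.eqb (evalA w).2 0 -> lenR (evalA w).1 <= m)
          (DistN n <= m).
Proof.
rewrite /DistN foldrE big_map big_filter.
apply: (iffP (bigmax_leqP_seq _ _ _ _)) => le_m w.
  by rewrite -mem_words_upto; apply: le_m.
by rewrite mem_words_upto; apply: le_m.
Qed.

Lemma DistN_ge n w :
  size w <= n -> Z.eqb (evalA w).2 0 -> lenR (evalA w).1 <= DistN n.
Proof. by move=> w_n w0; move/DistN_leP: (leqnn (DistN n)); apply. Qed.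

Lemma DistN_mono n m : n <= m -> DistN n <= DistN m.
Proof.
move=> n_m; apply/DistN_leP => w w_n; apply: DistN_ge.
exact: leq_trans n_m.
Qed.

Lemma mul_pow3_le_pow8 n : n * 3 ^ n <= 8 ^ n.
Proof.
case: n => // n; rewrite (_ : 8 = 2 * 4) // expnMn.
by rewrite leq_mul ?leq_exp2r // ltnW // ltn_expl.
Qed.

Lemma DistN_le_pow8 n : DistN n <= 8 ^ n.
Proof.
apply/DistN_leP => w w_n _; apply: leq_trans (size_reduce _) _.
apply: leq_trans (size_evalA _) _; apply: leq_trans (mul_pow3_le_pow8 _) _.
exact: leq_pexp2l.
Qed.

Definition positive (w : seq letter) := all (fun x : letter => ~~ x.2) w.

Definition phi_flat (w : seq letter) := flatten [seq phi_gen x.1 | x <- w].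

Definition count_a (w : seq letter) := count (fun x : letter => ~~ x.1) w.
Definition count_b (w : seq letter) := count (fun x : letter => x.1) w.

Lemma reduce_positive w : positive w -> reduce w = w.
Proof.
elim: w => [|x w IH] // /andP [x_pos w_pos]; rewrite reduce_cons IH //.
case: w w_pos {IH} => [|y r] //= /andP [y_pos _].
by case: ifP => // /eqP y_inv; move: y_pos; rewrite y_inv /= x_pos.
Qed.

Lemma positive_phi_flat w : positive (phi_flat w).
Proof. by elim: w => [|[[] s] w IH] //=; rewrite /positive all_cat IH. Qed.

Lemma phi_positive w : positive w -> phi w = phi_flat w.
Proof.
move=> /allP w_pos; rewrite /phi /subst.
rewrite -[phi_flat w]reduce_positive ?positive_phi_flat //.
by congr (reduce (flatten _)); apply/eq_in_map => x /w_pos; case: x.2.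
Qed.

Lemma size_count_ab w : size w = count_a w + count_b w.
Proof. by rewrite addnC count_predC. Qed.

Lemma count_a_phi_flat w : count_a (phi_flat w) = 2 * count_a w + count_b w.
Proof. by elim: w => [|[[] s] w IH] //=; rewrite -/(phi_flat w) IH; lia. Qed.

Lemma count_b_phi_flat w : count_b (phi_flat w) = count_a w.
Proof. by elim: w => [|[[] s] w IH] //=; rewrite -/(phi_flat w) IH; lia. Qed.

Lemma rev_phi_flat w : rev (phi_flat w) = phi_flat (rev w).
Proof.
elim: w => [|x w IH] //=.
by rewrite rev_cat IH rev_cons /phi_flat map_rcons flatten_rcons; case: x.1.
Qed.

Definition phi_iter_a m := iter m phi [:: la].

Lemma positive_phi_iter_a m : positive (phi_iter_a m).
Proof.
by elim: m => [|m IH] //; rewrite /phi_iter_a iterS phi_positive ?positive_phi_flat.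
Qed.

Lemma phi_iter_aS m : phi_iter_a m.+1 = phi_flat (phi_iter_a m).
Proof. exact/phi_positive/positive_phi_iter_a. Qed.

Lemma reduce_phi_iter_a m : reduce (phi_iter_a m) = phi_iter_a m.
Proof. exact/reduce_positive/positive_phi_iter_a. Qed.

Lemma lenR_phi_iter_a m : lenR (phi_iter_a m) = size (phi_iter_a m).
Proof. by rewrite /lenR reduce_phi_iter_a. Qed.

Lemma count_b_le_count_a_phi_iter_a m :
  count_b (phi_iter_a m) <= count_a (phi_iter_a m).
Proof.
by elim: m => [|m IH] //; rewrite phi_iter_aS count_a_phi_flat count_b_phi_flat; lia.
Qed.

Lemma pow2_le_size_phi_iter_a m : 2 ^ m <= size (phi_iter_a m).
Proof.
elim: m => [|m IH] //; move: IH (count_b_le_count_a_phi_iter_a m).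
by rewrite phi_iter_aS expnS !size_count_ab count_a_phi_flat count_b_phi_flat; lia.
Qed.

Lemma size_phi_iter_aS_le m : size (phi_iter_a m.+1) <= 3 * size (phi_iter_a m).
Proof.
move: (count_b_le_count_a_phi_iter_a m).
by rewrite phi_iter_aS !size_count_ab count_a_phi_flat count_b_phi_flat; lia.
Qed.

Lemma rev_phi_iter_a m : rev (phi_iter_a m) = phi_iter_a m.
Proof. by elim: m => [|m IH] //; rewrite phi_iter_aS rev_phi_flat IH. Qed.

Definition tconj_a m : seq tletter :=
  nseq m (None, false) ++ (Some false, false) :: nseq m (None, true).

Lemma foldl_astep_nseq_t u k j s : foldl astep (u, k) (nseq j (None, s)) =
  (u, if s then (k - Z.of_nat j)%Z else (k + Z.of_nat j)%Z).
Proof. by case: s; elim: j k => [|j IH] k /=; rewrite ?IH; congr pair; lia. Qed.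

Lemma evalA_tconj_a m : evalA (tconj_a m) = (phi_iter_a m, 0%Z).
Proof.
rewrite /evalA foldl_cat foldl_astep_nseq_t /= foldl_astep_nseq_t Z.sub_diag /phiZ.
have /Z.leb_spec0 -> : (0 <= Z.of_nat m)%Z by lia.
by rewrite Nat2Z.id /fmul cat0s reduce_phi_iter_a.
Qed.

Lemma lenT_le g w : represents g w -> lenT g <= size w.
Proof.
move=> g_w; rewrite /lenT; set s := iota 0 _.
have [w_s|s_w] := ltnP (size w) (size s); last exact: leq_trans (find_size _ _) s_w.
have w_g : size w < (lenR g).+1 by rewrite size_iota in w_s.
rewrite leqNgt; apply/negP => /(before_find 0).
rewrite /s (nth_iota _ _ w_g) add0n => /negP; apply.
by apply/hasP; exists w; rewrite ?mem_words.
Qed.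

Lemma lenT_phi_iter_a m : lenT (phi_iter_a m) <= (2 * m).+1.
Proof.
have -> : (2 * m).+1 = size (tconj_a m) by rewrite size_cat /= !size_nseq; lia.
by apply: lenT_le; rewrite /represents evalA_tconj_a reduce_phi_iter_a eqxx.
Qed.

Lemma size_phi_iter_a_le_DistN m : size (phi_iter_a m) <= DistN (2 * m).+1.
Proof.
have := @DistN_ge (2 * m).+1 (tconj_a m); rewrite evalA_tconj_a lenR_phi_iter_a.
by apply; rewrite // size_cat /= !size_nseq; lia.
Qed.

Open Scope R_scope.

Lemma INR_leq m n : (m <= n)%N -> INR m <= INR n.
Proof. by move/leP/le_INR. Qed.

Lemma INR_expn m k : INR (m ^ k) = INR m ^ k.
Proof. by elim: k => [|k IH] //; rewrite expnS mulnE mult_INR IH. Qed.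

Lemma exp_INR k : exp (INR k) = exp 1 ^ k.
Proof. by elim: k => [|k IH]; rewrite ?exp_0 // S_INR exp_plus IH /= Rmult_comm. Qed.

Lemma exp_le_exp x y : x <= y -> exp x <= exp y.
Proof.
by case/Rle_lt_or_eq_dec => [/exp_increasing/Rlt_le | ->]; last exact: Rle_refl.
Qed.

Lemma exp_INR_bounds k : INR (2 ^ k) <= exp (INR k) <= INR (4 ^ k).
Proof.
have := exp_ineq1_le 1; have := exp_le_3.
rewrite exp_INR !INR_expn => e_le3 e_ge2; split; apply: pow_incr; simpl; lra.
Qed.

Lemma INR_floor_bounds y : 0 <= y ->
  INR (Z.to_nat (Int_part y)) <= y < INR (Z.to_nat (Int_part y)) + 1.
Proof.
move=> y_ge0; have [fl_le fl_gt] := base_Int_part y.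
have fl_ge0 : (-1 < Int_part y)%Z by apply: lt_IZR; lra.
rewrite INR_IZR_INZ Z2Nat.id; lra || lia.
Qed.

Lemma Dist_bounds y : 0 <= y ->
  INR (DistN (Z.to_nat (Int_part y))) <= Dist y <= INR (DistN (Z.to_nat (Int_part y)).+1).
Proof.
move=> /INR_floor_bounds; rewrite /Dist; set n := Z.to_nat _ => y_n.
have := INR_leq (DistN_mono (leqnSn n)); nra.
Qed.

Lemma Dist_le_DistN y n : 0 <= y -> y < INR n -> Dist y <= INR (DistN n).
Proof.
move=> y_ge0 y_n; have [_ Dist_le] := Dist_bounds y_ge0.
have [fl_le _] := INR_floor_bounds y_ge0.
apply: Rle_trans Dist_le (INR_leq (DistN_mono _)).
by apply/ltP/INR_lt; lra.
Qed.

Lemma DistN_le_Dist y n : INR n <= y -> INR (DistN n) <= Dist y.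
Proof.
move=> n_y; have y_ge0 : 0 <= y by have := pos_INR n; lra.
have [le_Dist _] := Dist_bounds y_ge0; have [_ fl_gt] := INR_floor_bounds y_ge0.
apply: Rle_trans (INR_leq (DistN_mono _)) le_Dist.
by rewrite -ltnS; apply/ltP/INR_lt; rewrite S_INR; lra.
Qed.

Lemma Dist_le_exp : fle Dist (fun x => exp x).
Proof.
exists 6, 1, 1; split; [lra | split; [lra | split; [lra |]]] => x x_gt1.
set n := Z.to_nat (Int_part x).
have [n_le_x x_lt] : INR n <= x < INR n + 1 by apply: INR_floor_bounds; lra.
have Dist_le : Dist x <= INR (DistN n.+1) by apply: Dist_le_DistN; rewrite ?S_INR; lra.
have DistN_le : INR (DistN n.+1) <= INR (2 ^ (3 * n.+1)).
  by rewrite expnM; apply/INR_leq/DistN_le_pow8.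
have [pow2_le _] := exp_INR_bounds (3 * n.+1).
have exp_le : exp (INR (3 * n.+1)) <= exp (6 * x).
  by apply: exp_le_exp; rewrite mulnE mult_INR !S_INR INR_0; lra.
lra.
Qed.

Lemma exp_le_Dist : fle (fun x => exp x) Dist.
Proof.
exists 10, 1, 1; split; [lra | split; [lra | split; [lra |]]] => x x_gt1.
set n := Z.to_nat (Int_part x).
have [n_le_x x_lt] : INR n <= x < INR n + 1 by apply: INR_floor_bounds; lra.
have exp_le : exp x <= exp (INR n.+1) by apply: exp_le_exp; rewrite S_INR; lra.
have [_ le_pow4] := exp_INR_bounds n.+1.
have pow4_le : INR (4 ^ n.+1) <= INR (DistN (2 * (2 * n.+1)).+1).
  rewrite (_ : 4 = 2 ^ 2)%N // -expnM; apply/INR_leq.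
  exact: leq_trans (pow2_le_size_phi_iter_a _) (size_phi_iter_a_le_DistN _).
have DistN_le : INR (DistN (2 * (2 * n.+1)).+1) <= Dist (10 * x).
  by apply: DistN_le_Dist; rewrite S_INR !mulnE !mult_INR !S_INR INR_0; lra.
lra.
Qed.

Lemma Dist_lenT_phi_iter_a_le m :
  Dist (INR (lenT (phi_iter_a m)) / 64) <= 64 * INR (lenR (phi_iter_a m)).
Proof.
have y_ge0 : 0 <= INR (lenT (phi_iter_a m)) / 64.
  by have := pos_INR (lenT (phi_iter_a m)); lra.
have [n_le y_lt] := INR_floor_bounds y_ge0; set n := Z.to_nat _ in n_le y_lt.
have n_m : (64 * n <= (2 * m).+1)%N.
  apply/leP/INR_le; apply: Rle_trans (INR_leq (lenT_phi_iter_a m)).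
  rewrite mulnE mult_INR [INR 64]INR_IZR_INZ [Z.of_nat 64]/=; lra.
have DistN_le : (DistN n.+1 <= 64 * lenR (phi_iter_a m))%N.
  apply: leq_trans (DistN_le_pow8 _) _; rewrite lenR_phi_iter_a.
  apply: leq_trans (leq_mul (leqnn 64) (pow2_le_size_phi_iter_a m)).
  by rewrite (_ : 8 = 2 ^ 3)%N // -expnM (_ : 64 = 2 ^ 6)%N // -expnD leq_exp2l //; lia.
apply: Rle_trans (Dist_le_DistN (n := n.+1) y_ge0 _) _; first by rewrite S_INR; lra.
by have := INR_leq DistN_le; rewrite mulnE mult_INR [INR 64]INR_IZR_INZ [Z.of_nat 64]/=.
Qed.

Lemma exp_bounded_certificates_phi_iter_a : exp_bounded_certificates phi_iter_a.
Proof.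
split=> [m|]; first by rewrite /reduced reduce_phi_iter_a.
exists 64; split; [lra | split; [|split]] => [N|m|m].
- exists N => m N_m; rewrite lenR_phi_iter_a.
  have m_lt_pow2 : (m < 2 ^ m)%N by rewrite ltn_expl.
  exact: leq_trans N_m (leq_trans (ltnW m_lt_pow2) (pow2_le_size_phi_iter_a m)).
- rewrite !lenR_phi_iter_a; apply: Rle_trans (INR_leq (size_phi_iter_aS_le m)) _.
  by rewrite mulnE mult_INR !S_INR INR_0; have := pos_INR (size (phi_iter_a m)); lra.
- exact: Dist_lenT_phi_iter_a_le.
Qed.

Lemma palindromic_phi_iter_a : palindromic phi_iter_a.
Proof. by move=> m; rewrite reduce_phi_iter_a rev_phi_iter_a. Qed.

Close Scope R_scope.

Theorem lemma5p5 :
  fequiv Dist (fun x => exp x) /\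
  exists gs : nat -> seq letter,
    exp_bounded_certificates gs /\ palindromic gs.
Proof.
split; first exact: (conj Dist_le_exp exp_le_Dist).
exists phi_iter_a; split.
- exact: exp_bounded_certificates_phi_iter_a.
- exact: palindromic_phi_iter_a.
Qed.
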